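(* Let $H=(H^1,\dots,H^m):\mathbb{R}^d\to\mathbb{R}^m$ be such that for each $i$ there are convex functions $H^i_1,H^i_2:\mathbb{R}^d\to\mathbb{R}$ with $H^i=H^i_1-H^i_2$, and set $G:=\sum_{i=1}^m(H^i_1+H^i_2)$. Assume that $\gamma>0$, $A$ is a positive definite symmetric $d\times d$ matrix, and $L:\mathbb{R}^d\to\mathbb{R}$ satisfies $D^2L\ge A$ in the sense of distributions. For $(x,\tau)\in\mathbb{R}^d\times\mathbb{R}^m$ define \[\Phi(x,\tau):=\sup_{p\in\mathbb{R}^d}\Big\{p\cdot x-L(p)-\gamma G(p)+\sum_{i=1}^m\tau_iH^i(p)\Big\}.\] Then $\Phi\in C^{1,1}(\mathbb{R}^d\times(-\gamma,\gamma)^m)$, $0\le D_x^2\Phi\le A^{-1}$ in the sense of distributions, and \[\partial_{\tau_i}\Phi(x,\tau)=H^i(D_x\Phi(x,\tau))\quad\text{for } i=1,\dots,m,\ (x,\tau)\in\mathbb{R}^d\times(-\gamma,\gamma)^m.\] *)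

From HB Require Import structures.
From mathcomp Require Import all_boot all_order all_algebra.
From mathcomp Require Import all_classical all_reals all_analysis.
Set Implicit Arguments. Unset Strict Implicit. Unset Printing Implicit Defensive.
Import Order.TTheory GRing.Theory Num.Theory.
Import numFieldNormedType.Exports.
Local Open Scope ring_scope.
Local Open Scope classical_set_scope.

Section Defs.
Context {R : realType}.

Definition dotv {n : nat} (u v : 'rV[R]_n) : R := \sum_(j < n) u 0 j * v 0 j.

Definition qform {n : nat} (M : 'M[R]_n) (v : 'rV[R]_n) : R := dotv (v *m M) v.

Definition convex_fun {n : nat} (f : 'rV[R]_n -> R) : Prop :=
  forall (x y : 'rV[R]_n) (t : R), 0 <= t <= 1 ->
    f (t *: x + (1 - t) *: y) <= t * f x + (1 - t) * f y.

Definition posdef_sym {n : nat} (A : 'M[R]_n) : Prop :=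
  A^T = A /\ forall v : 'rV[R]_n, v != 0 -> 0 < qform A v.

(* D^2 f >= A in the sense of distributions: f - (1/2) p.Ap is convex *)
Definition hess_ge {n : nat} (f : 'rV[R]_n -> R) (A : 'M[R]_n) : Prop :=
  convex_fun (fun p => f p - qform A p / 2).

(* D^2 f <= A in the sense of distributions: (1/2) p.Ap - f is convex *)
Definition hess_le {n : nat} (f : 'rV[R]_n -> R) (A : 'M[R]_n) : Prop :=
  convex_fun (fun p => qform A p / 2 - f p).

Definition Gsum {d m : nat} (H1 H2 : 'I_m -> 'rV[R]_d -> R) (p : 'rV[R]_d) : R :=
  \sum_(i < m) (H1 i p + H2 i p).

Definition Phi {d m : nat} (L : 'rV[R]_d -> R) (gamma : R)
  (H1 H2 H : 'I_m -> 'rV[R]_d -> R) (x : 'rV[R]_d) (tau : 'rV[R]_m) : R :=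
  sup [set y | exists p : 'rV[R]_d,
         y = dotv p x - L p - gamma * Gsum H1 H2 p + \sum_(i < m) tau 0 i * H i p].

Definition unit_rv {n : nat} (j : 'I_n) : 'rV[R]_n := delta_mx 0 j.

Definition gradx {d m : nat} (F : 'rV[R]_d -> 'rV[R]_m -> R)
  (x : 'rV[R]_d) (tau : 'rV[R]_m) : 'rV[R]_d :=
  \row_(j < d) derive (fun y => F y tau) x (unit_rv j).

Definition Omega {d m : nat} (gamma : R) : set ('rV[R]_d * 'rV[R]_m) :=
  [set z : 'rV[R]_d * 'rV[R]_m | forall i : 'I_m, - gamma < z.2 0 i < gamma].

(* C^{1,1}(O) (local version): f differentiable on O with a
   derivative that is Lipschitz on a neighbourhood of each point of O
   (i.e. |Df(z)v - Df(w)v| <= C |z-w| |v|). *)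
Definition C11 {V : normedModType R} (f : V -> R) (O : set V) : Prop :=
  (forall z, O z -> differentiable f z) /\
  forall z0, O z0 -> exists r : R, 0 < r /\ exists C : R,
    forall z w v : V, O z -> O w -> ball z0 r z -> ball z0 r w ->
      `|derive f z v - derive f w v| <= C * `|z - w| * `|v|.

End Defs.

From HB Require Import structures.
From mathcomp Require Import all_boot all_order all_algebra.
From mathcomp Require Import all_classical all_reals all_analysis.
From mathcomp Require Import ring lra.
Import Order.TTheory GRing.Theory Num.Theory.
Import numFieldNormedType.Exports.
Local Open Scope ring_scope.
Local Open Scope classical_set_scope.

(* For tau in the closed box |tau_i| <= gamma the cost
     K_tau := L + gamma G - sum_i tau_i H^i
            = (L - Ap.p/2) + sum_i ((gamma - tau_i) H^i_1 + (gamma + tau_i) H^i_2) + Ap.p/2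
   is A-strongly convex, so Phi(., tau) is the convex conjugate of K_tau, the
   supremum is attained at a maximiser p_z (z = (x, tau)), and, as the
   conjugate of an A-strongly convex function, Phi(., tau) is convex with
   D^2 <= A^-1.  The objective p.x - K_tau(p) is affine in z with slope
   dPhi p (h_x, h_tau) = p.h_x + sum_i h_tau,i H^i(p), which is locally
   Lipschitz in p.  Comparing the maximisers at two parameters z, w through
   strong concavity shows that z |-> p_z is locally Lipschitz and that
   Phi(w) - Phi(z) - dPhi p_z (w - z) = O(|w - z|^2).  So Phi is differentiable
   with the locally Lipschitz derivative dPhi p_z; this gives C^{1,1},
   D_x Phi = p_z and d_tau_i Phi = H^i(p_z). *)

Section InnerProduct.
Context {R : realType} {n : nat}.
Implicit Types u v w : 'rV[R]_n.

Lemma normr_rv_coord v j : `|v 0 j| <= `|v|.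
Proof.
rewrite [X in _ <= X]/Num.Def.normr /= mx_normrE.
exact: (le_bigmax _ (fun ij : 'I_1 * 'I_n => `|v ij.1 ij.2|) (0, j)).
Qed.

Lemma normr_rv_le v M : 0 <= M -> (forall j, `|v 0 j| <= M) -> `|v| <= M.
Proof.
move=> M0 hv; rewrite [X in X <= _]/Num.Def.normr /= mx_normrE.
by apply: bigmax_le => // -[i j] _ /=; rewrite (ord1 i).
Qed.

Lemma normr_rv_attained v : v = 0 \/ exists j, `|v| = `|v 0 j|.
Proof.
have [->|v0] := eqVneq v 0; first by left.
have /mx_norm_neq0 [[i j] hj] : `|v| != 0 by rewrite normr_eq0.
by right; exists j; rewrite /Num.Def.normr /= hj /= (ord1 i).
Qed.

Lemma dotvC u v : dotv u v = dotv v u.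
Proof. by apply: eq_bigr => j _; rewrite mulrC. Qed.

Lemma dotvDl u v w : dotv (u + v) w = dotv u w + dotv v w.
Proof. by rewrite /dotv -big_split; apply: eq_bigr => j _; rewrite mxE mulrDl. Qed.

Lemma dotvZl a u w : dotv (a *: u) w = a * dotv u w.
Proof. by rewrite /dotv mulr_sumr; apply: eq_bigr => j _; rewrite mxE mulrA. Qed.

Lemma dotvNl u w : dotv (- u) w = - dotv u w.
Proof. by rewrite -scaleN1r dotvZl mulN1r. Qed.

Lemma dotvBl u v w : dotv (u - v) w = dotv u w - dotv v w.
Proof. by rewrite dotvDl dotvNl. Qed.

Lemma dotv0l w : dotv 0 w = 0.
Proof. by rewrite -(scale0r 0) dotvZl mul0r. Qed.

Lemma dotvDr u v w : dotv w (u + v) = dotv w u + dotv w v.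
Proof. by rewrite !(dotvC w) dotvDl. Qed.

Lemma dotvZr a u w : dotv w (a *: u) = a * dotv w u.
Proof. by rewrite !(dotvC w) dotvZl. Qed.

Lemma dotvNr u w : dotv w (- u) = - dotv w u.
Proof. by rewrite !(dotvC w) dotvNl. Qed.

Lemma dotvBr u v w : dotv w (u - v) = dotv w u - dotv w v.
Proof. by rewrite !(dotvC w) dotvBl. Qed.

Lemma dotv0r w : dotv w 0 = 0.
Proof. by rewrite dotvC dotv0l. Qed.

Lemma dotv_mulmxl u v (M : 'M[R]_n) : dotv (u *m M) v = dotv u (v *m M^T).
Proof.
rewrite /dotv.
under eq_bigr do rewrite mxE big_distrl /=.
under [RHS]eq_bigr do rewrite mxE big_distrr /=.
rewrite exchange_big /=; apply: eq_bigr => i _; apply: eq_bigr => j _.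
by rewrite mxE; ring.
Qed.

Lemma sum_delta_mul (c : 'I_n -> R) j : \sum_(k < n) unit_rv j 0 k * c k = c j.
Proof.
rewrite (bigD1 j) //= big1 => [|k kj]; rewrite /unit_rv mxE.
  by rewrite !eqxx /= mul1r addr0.
by rewrite (negbTE kj) andbF mul0r.
Qed.

Lemma dotv_delta v j : dotv v (unit_rv j) = v 0 j.
Proof. by rewrite dotvC /dotv sum_delta_mul. Qed.

Lemma ler_norm_dotv u v : `|dotv u v| <= n%:R * `|u| * `|v|.
Proof.
rewrite /dotv (le_trans (ler_norm_sum _ _ _)) //.
rewrite -mulrA mulr_natl -[n in _ *+ n]card_ord -sumr_const.
apply: ler_sum => j _; rewrite normrM.
by apply: ler_pM => //; apply: normr_rv_coord.
Qed.

End InnerProduct.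

Section Arithmetic.
Context {R : realFieldType}.

Lemma ler_mul_small (K e a : R) : 0 <= K -> 0 <= a -> a <= e / (K + 1) -> K * a <= e.
Proof.
move=> K0 a0 ha; apply: le_trans (ler_wpM2l K0 ha) _.
have K1 : 0 < K + 1 by lra.
have e0 : 0 <= e.
  by have := mulr_ge0 (le_trans a0 ha) (ltW K1); rewrite divfK // gt_eqF.
by rewrite mulrA ler_pdivrMr // mulrDr mulr1 mulrC lerDl.
Qed.

Lemma le_of_sqr_le_linear (s b e : R) : 0 <= b -> 0 <= e ->
  s ^+ 2 <= b * s + e -> s <= 1 + b + e.
Proof.
move=> b0 e0 hs; have [s1|s1] := lerP s 1; first lra.
have es : e <= e * s by rewrite ler_peMr // ltW.
have : s * s <= s * (b + e) by rewrite mulrDr -expr2 [s * b]mulrC [s * e]mulrC; lra.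
by rewrite ler_pM2l; lra.
Qed.

Lemma ler_scaled_minorant (c g y a b s : R) : 0 <= c <= g -> 0 <= b -> 0 <= s ->
  a - b * s <= y -> - (g * (`|a| + b * s)) <= c * y.
Proof.
move=> /andP[c0 cg] b0 s0 hy; have K0 : 0 <= `|a| + b * s by rewrite addr_ge0 ?mulr_ge0.
have hK : - (`|a| + b * s) <= y by have := ler_norm (- a); rewrite normrN; lra.
have := ler_wpM2l c0 hK; have := ler_wpM2r K0 cg; lra.
Qed.

Lemma ler_scaled_norm (c g y : R) : 0 <= c <= g -> c * y <= g * `|y|.
Proof.
move=> /andP[c0 cg]; apply: le_trans (ler_wpM2l c0 (ler_norm y)) _.
exact: ler_wpM2r.
Qed.

End Arithmetic.

Section PairNorm.
Context {R : realFieldType} {U V : normedModType R}.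
Implicit Types (u : U) (v : V) (h : U * V).

Lemma normr_fst_le h : `|h.1| <= `|h|.
Proof. by rewrite prod_normE le_max lexx. Qed.

Lemma normr_snd_le h : `|h.2| <= `|h|.
Proof. by rewrite prod_normE le_max lexx orbT. Qed.

Lemma normr_pair0r u : `|(u, 0 : V)| = `|u|.
Proof. by rewrite prod_normE /= normr0; apply/max_idPl. Qed.

Lemma normr_pair0l v : `|(0 : U, v)| = `|v|.
Proof. by rewrite prod_normE /= normr0; apply/max_idPr. Qed.

End PairNorm.

Section ConvexFunctions.
Context {R : realType} {n : nat}.
Implicit Types f g : 'rV[R]_n -> R.

Lemma convex_funP {f} (hf : convex_fun f) (x y : 'rV[R]_n) t : 0 <= t -> t <= 1 ->
  f (t *: x + (1 - t) *: y) <= t * f x + (1 - t) * f y.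
Proof. by move=> t0 t1; apply: hf; rewrite t0 t1. Qed.

Lemma convex_funD f g : convex_fun f -> convex_fun g -> convex_fun (fun p => f p + g p).
Proof. by move=> hf hg x y t ht; have := hf x y t ht; have := hg x y t ht; lra. Qed.

Lemma convex_funZ c f : 0 <= c -> convex_fun f -> convex_fun (fun p => c * f p).
Proof. by move=> c0 hf x y t /(hf x y) /(ler_wpM2l c0); lra. Qed.

Lemma convex_fun_sum k (F : 'I_k -> 'rV[R]_n -> R) : (forall i, convex_fun (F i)) ->
  convex_fun (fun p => \sum_(i < k) F i p).
Proof.
move=> hF x y t ht; apply: le_trans (ler_sum _ (fun i _ => hF i x y t ht)) _.
by rewrite big_split /= -!mulr_sumr.
Qed.

Lemma convex_fun_jensen f k (w : 'I_k -> R) (v : 'I_k -> 'rV[R]_n) (b : 'rV[R]_n) :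
  convex_fun f -> (forall i, 0 <= w i) -> \sum_i w i <= 1 ->
  f (b + \sum_i w i *: (v i - b)) <= (1 - \sum_i w i) * f b + \sum_i w i * f (v i).
Proof.
move=> hf; elim: k w v => [|k IH] w v w0 ws.
  by rewrite !big_ord0 addr0 subr0 mul1r addr0.
move: ws; rewrite !big_ord_recr /=.
set t := w ord_max; set s := \sum_(i < k) w (widen_ord _ i) => ws.
have t0 : 0 <= t by apply: w0.
have s0 : 0 <= s by apply: sumr_ge0 => i _; apply: w0.
have [t1|t1] := eqVneq t 1.
  have s00 : s = 0 by apply/eqP; rewrite eq_le s0 andbT; move: ws; rewrite t1; lra.
  have wi0 i : w (widen_ord (leqnSn k) i) = 0.
    by apply: (psumr_eq0P (P := xpredT) _ s00) => // j _; apply: w0.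
  rewrite big1 => [|i _]; last by rewrite wi0 scale0r.
  rewrite big1 => [|i _]; last by rewrite wi0 mul0r.
  rewrite -/s s00 t1 scale1r add0r [b + _]addrC subrK; lra.
have tl1 : t < 1 by rewrite lt_neqAle t1 /=; move: ws; lra.
set u := 1 - t.
have u0 : 0 < u by rewrite /u; lra.
(* the first k points carry the renormalised weights w i / u *)
pose w' i := w (widen_ord (leqnSn k) i) / u.
have w'0 i : 0 <= w' i by rewrite /w' divr_ge0 // ?w0 // ltW.
have sw' : \sum_i w' i = s / u by rewrite /w' -mulr_suml.
have ws' : \sum_i w' i <= 1 by rewrite sw' ler_pdivrMr // mul1r /u; move: ws; lra.
have := IH w' (fun i => v (widen_ord (leqnSn k) i)) w'0 ws'.
set X := \sum_i w' i *: _; set Y := \sum_i w' i * _; move=> hIH.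
have eX : \sum_(i < k) w (widen_ord (leqnSn k) i) *: (v (widen_ord (leqnSn k) i) - b)
    = u *: X.
  rewrite /X scaler_sumr; apply: eq_bigr => i _; rewrite scalerA /w'.
  by rewrite mulrC divfK // gt_eqF.
have eY : \sum_(i < k) w (widen_ord (leqnSn k) i) * f (v (widen_ord (leqnSn k) i))
    = u * Y.
  rewrite /Y mulr_sumr; apply: eq_bigr => i _; rewrite /w' mulrA.
  by rewrite [u * _]mulrC divfK // gt_eqF.
rewrite eX; have -> : b + (u *: X + t *: (v ord_max - b)) =
    t *: v ord_max + (1 - t) *: (b + X).
  by rewrite /u; apply/rowP => j; rewrite !mxE; ring.
apply: le_trans (convex_funP hf (v ord_max) (b + X) t t0 (ltW tl1)) _.
rewrite eY -/u; move: hIH; rewrite sw' => /(ler_wpM2l (ltW u0)).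
have -> : u * ((1 - s / u) * f b + Y) = (u - s) * f b + u * Y.
  by field; rewrite gt_eqF.
rewrite /u; lra.
Qed.

Lemma convex_fun_ball_ub f rho : convex_fun f -> 0 <= rho ->
  exists M, forall q, `|q| <= rho -> f q <= M.
Proof.
move=> hf r0; set c := n%:R * rho + 1.
have nr0 : 0 <= n%:R * rho by apply: mulr_ge0.
have c0 : 0 < c by rewrite /c; lra.
(* the ball lies in the convex hull of 0 and the 2n points +-c e_j *)
pose M := `|f 0| + \sum_(j < n) (`|f (c *: unit_rv j)| + `|f ((- c) *: unit_rv j)|).
exists M => q hq.
pose w j := `|q 0 j| / c.
pose v j := (if 0 <= q 0 j then c else - c) *: (unit_rv j : 'rV[R]_n).
have w0 j : 0 <= w j by rewrite /w divr_ge0 // ltW.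
have sw : \sum_j w j <= 1.
  rewrite /w -mulr_suml ler_pdivrMr // mul1r.
  apply: (@le_trans _ _ (\sum_(j < n) rho)).
    by apply: ler_sum => j _; apply: le_trans (normr_rv_coord q j) hq.
  rewrite sumr_const card_ord -mulr_natl /c; lra.
have qE : q = 0 + \sum_j w j *: (v j - 0).
  rewrite add0r; under eq_bigr do rewrite subr0.
  rewrite {1}(row_sum_delta q); apply: eq_bigr => j _; rewrite /v /w scalerA.
  congr (_ *: _); case: ifP => h.
    by rewrite ger0_norm // divfK // gt_eqF.
  by rewrite ltr0_norm ?ltNge ?h //; field; rewrite gt_eqF.
have f0M : f 0 <= M.
  rewrite /M; apply: le_trans (ler_norm _) _; rewrite lerDl.
  by apply: sumr_ge0 => j _; apply: addr_ge0.
have fvM j : f (v j) <= M.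
  have : `|f (c *: unit_rv j)| + `|f ((- c) *: unit_rv j)| <= M - `|f 0|.
    rewrite [M - _]addrC /M addKr (bigD1 j) //= lerDl.
    by apply: sumr_ge0 => i _; apply: addr_ge0.
  have := normr_ge0 (f 0); have := ler_norm (f (c *: unit_rv j)).
  have := ler_norm (f ((- c) *: unit_rv j)); have := normr_ge0 (f (c *: unit_rv j)).
  have := normr_ge0 (f ((- c) *: unit_rv j)).
  rewrite /v; case: ifP => _; lra.
rewrite qE; apply: le_trans (convex_fun_jensen _ _ _ v 0 hf w0 sw) _.
apply: le_trans
  (lerD (ler_wpM2l _ f0M) (ler_sum _ (fun j _ => ler_wpM2l (w0 j) (fvM j)))) _.
  by rewrite subr_ge0.
have -> : \sum_(i < n) w i * M = (\sum_i w i) * M by rewrite mulr_suml.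
lra.
Qed.

Lemma convex_fun_ball_lipschitz f rho : convex_fun f -> 0 <= rho ->
  exists C, 0 <= C /\ forall x y, `|x| <= rho -> `|y| <= rho ->
    `|f x - f y| <= C * `|x - y|.
Proof.
move=> hf r0; have [M hM] := convex_fun_ball_ub _ (rho + 1) hf (ltac:(lra)).
have f0M : f 0 <= M by apply: hM; rewrite normr0; lra.
have lb q : `|q| <= rho + 1 -> 2 * f 0 - M <= f q.
  move=> hq; have := convex_funP hf q (- q) (1/2) (ltac:(lra)) (ltac:(lra)).
  have -> : (1/2) *: q + (1 - 1/2) *: (- q) = 0.
    by apply/rowP => j; rewrite !mxE; field.
  by have := hM (- q); rewrite normrN => /(_ hq); lra.
exists (2 * M - 2 * f 0); split; first lra.
(* push y away from x by a unit length: z = y + (y - x) / |y - x| stays in the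
   bigger ball, and y is a convex combination of x and z *)
have ub x y : `|x| <= rho -> `|y| <= rho -> f y - f x <= (2 * M - 2 * f 0) * `|y - x|.
  move=> hx hy; have [->|nxy] := eqVneq y x; first by rewrite !subrr normr0 mulr0.
  set dl := `|y - x|.
  have dl0 : 0 < dl by rewrite normr_gt0 subr_eq0.
  set z := y + dl^-1 *: (y - x).
  have hz : `|z| <= rho + 1.
    apply: le_trans (ler_normD _ _) _; rewrite normrZ ger0_norm; last first.
      by rewrite invr_ge0 ltW.
    by rewrite mulVf ?gt_eqF //; lra.
  set lam := (1 + dl)^-1.
  have l0 : 0 < lam by rewrite invr_gt0; lra.
  have lamE : lam * (1 + dl) = 1 by rewrite mulVf // gt_eqF //; lra.
  have yE : y = lam *: x + (1 - lam) *: z.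
    by apply/rowP => j; rewrite !mxE /lam; field; rewrite !gt_eqF //; lra.
  have l1 : lam <= 1 by rewrite -lamE ler_peMr ?ltW //; lra.
  have hc := convex_funP hf x z lam (ltW l0) l1; rewrite -yE in hc.
  have lx := lb x (ltac:(lra)); have uz := hM z hz.
  have e1 : 1 - lam = dl * lam by rewrite -[X in X - _]lamE; ring.
  have h1 : (1 - lam) * (f z - f x) <= (1 - lam) * (2 * M - 2 * f 0).
    by apply: ler_wpM2l; lra.
  have h2 : (1 - lam) * (2 * M - 2 * f 0) <= dl * (2 * M - 2 * f 0).
    by apply: ler_wpM2r; [lra | rewrite e1 ger_pMr].
  rewrite mulrC; lra.
move=> x y hx hy; rewrite ler_norml; apply/andP; split.
  by rewrite distrC; have := ub x y hx hy; lra.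
exact: ub.
Qed.

Lemma convex_fun_affine_minorant f : convex_fun f ->
  exists b, 0 <= b /\ forall p, f 0 - b * `|p| <= f p.
Proof.
move=> hf; have [M hM] := convex_fun_ball_ub _ 1 hf ler01.
have f0M : f 0 <= M by apply: hM; rewrite normr0.
exists (M - f 0); split; first lra.
move=> p; have [->|p0] := eqVneq p 0; first by rewrite normr0 mulr0 subr0.
(* 0 is a convex combination of p and the point q of norm 1 opposite to p *)
set s := `|p|; have s0 : 0 < s by rewrite normr_gt0.
set q := (- s^-1) *: p.
have hq : `|q| <= 1.
  rewrite normrZ normrN ger0_norm; last by rewrite invr_ge0 ltW.
  by rewrite mulVf // gt_eqF.
set lam := (1 + s)^-1.
have l0 : 0 < lam by rewrite invr_gt0; lra.
have lamE : lam * (1 + s) = 1 by rewrite mulVf // gt_eqF //; lra.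
have l1 : lam <= 1 by rewrite -lamE ler_peMr ?ltW //; lra.
have e0 : 0 = lam *: p + (1 - lam) *: q.
  by apply/rowP => j; rewrite !mxE /lam; field; rewrite !gt_eqF //; lra.
have := convex_funP hf p q lam (ltW l0) l1; rewrite -e0.
have : (1 - lam) * f q <= (1 - lam) * M by apply: ler_wpM2l; [lra | apply: hM].
move=> h1 h2.
have : (1 + s) * f 0 <= (1 + s) * (lam * f p + (1 - lam) * M).
  by apply: ler_wpM2l; lra.
have -> : (1 + s) * (lam * f p + (1 - lam) * M) = f p + s * M.
  by rewrite /lam; field; rewrite gt_eqF //; lra.
rewrite mulrC; lra.
Qed.

End ConvexFunctions.

Section QuadraticApproximation.
Context {R : realFieldType} {V : normedModType R}.

Lemma locally_lipschitz_continuous (g : V -> R) :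
  (forall x, exists r C, 0 < r /\ 0 <= C /\
     forall y, `|y - x| < r -> `|g y - g x| <= C * `|y - x|) ->
  continuous g.
Proof.
move=> hg x; apply/cvgrPdist_le => e e0.
have [r [C [r0 [C0 hC]]]] := hg x.
apply/nbhs_normP; exists (Num.min r (e / (C + 1))) => /=.
  by rewrite lt_min r0 /=; apply: divr_gt0 => //; lra.
move=> y /=; rewrite lt_min !(distrC x) => /andP[h1 h2]; rewrite distrC.
by apply: le_trans (hC y h1) _; apply: ler_mul_small => //; apply: ltW.
Qed.

Variables (f : V -> R) (x : V) (g : V -> R) (r K : R).
Hypotheses (r0 : 0 < r) (K0 : 0 <= K)
  (approx : forall h, `|h| < r -> `|f (h + x) - f x - g h| <= K * `|h| ^+ 2).

Lemma differentiable_quadratic_approx C : linear g ->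
  (forall h, `|g h| <= C * `|h|) -> differentiable f x.
Proof.
move=> glin gC.
pose gL : {linear V -> R} := HB.pack g (GRing.isLinear.Build _ _ _ _ g glin).
have gc : continuous gL.
  apply: locally_lipschitz_continuous => y; exists 1, `|C|; split => //; split => // z _.
  rewrite -linearB; apply: le_trans (gC _) _; apply: ler_wpM2r => //; exact: ler_norm.
have fE : f \o shift x = cst (f x) + gL +o_ 0 id.
  apply/eqaddoP => e e0; apply/nbhs_normP.
  exists (Num.min r (e / (K + 1))) => /=.
    by rewrite lt_min r0 divr_gt0 // ltr_wpDl.
  move=> h /=; rewrite lt_min sub0r normrN => /andP[h1 h2].
  rewrite !fctE /= opprD addrA.
  change (`|f (h + x) - f x - g h| <= e * `|h|); apply: le_trans (approx _ h1) _.
  by rewrite expr2 mulrA; apply: ler_wpM2r => //; apply: ler_mul_small => //; apply: ltW.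
by apply/diff_locallyP; rewrite (diff_unique gc fE).
Qed.

Lemma derive_quadratic_approx v : (forall t u, g (t *: u) = t * g u) ->
  derive f x v = g v.
Proof.
move=> gZ; apply: cvg_lim => //; apply/cvgrPdist_le => e e0.
rewrite near_withinE; apply/nbhs_normP.
set c := K * (`|v| + 1) ^+ 2.
have c0 : 0 <= c by apply: mulr_ge0 => //; apply: sqr_ge0.
have v1 : 0 < `|v| + 1 by have := normr_ge0 v; lra.
exists (Num.min (r / (`|v| + 1)) (e / (c + 1))) => /=.
  by rewrite lt_min; apply/andP; split; apply: divr_gt0 => //; lra.
move=> t /=; rewrite lt_min sub0r normrN => /andP[h1 h2] t0.
have tp : 0 < `|t| by rewrite normr_gt0.
have htv : `|t *: v| < r.
  rewrite normrZ; rewrite ltr_pdivlMr // in h1.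
  by apply: le_lt_trans h1; apply: ler_wpM2l; [exact: ltW | lra].
have := approx _ htv; rewrite gZ.
have -> : g v - t^-1 *: (f (t *: v + x) - f x) =
    - (t^-1 * (f (t *: v + x) - f x - t * g v)).
  by rewrite [in RHS]mulrBr mulrA mulVf // mul1r opprB.
rewrite normrN normrM normfV ler_pdivrMl // => /le_trans; apply.
rewrite normrZ exprMn.
have -> : K * (`|t| ^+ 2 * `|v| ^+ 2) = `|t| * (K * `|v| ^+ 2 * `|t|) by ring.
rewrite ler_pM2l //; apply: le_trans (_ : c * `|t| <= e).
  apply: ler_wpM2r => //; apply: ler_wpM2l => //.
  by rewrite !expr2; apply: ler_pM; rewrite ?normr_ge0 //; lra.
by apply: ler_mul_small => //; apply: ltW.
Qed.

End QuadraticApproximation.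

Section QuadraticForms.
Context {R : realType} {n : nat}.
Implicit Types (M : 'M[R]_n) (u v : 'rV[R]_n).

Lemma qform0 M : qform M 0 = 0.
Proof. by rewrite /qform mul0mx dotv0l. Qed.

Lemma qformZ M s v : qform M (s *: v) = s ^+ 2 * qform M v.
Proof. by rewrite /qform -scalemxAl dotvZl dotvZr mulrA expr2. Qed.

Lemma dotv_mulmx_sym M u v : M^T = M -> dotv (u *m M) v = dotv (v *m M) u.
Proof. by move=> hM; rewrite dotv_mulmxl hM dotvC. Qed.

Lemma qform_convex_comb M u v t : M^T = M ->
  qform M (t *: u + (1 - t) *: v) =
  t * qform M u + (1 - t) * qform M v - t * (1 - t) * qform M (u - v).
Proof.
move=> hM; rewrite /qform !mulmxDl ?mulNmx -!scalemxAl.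
rewrite !dotvDl ?dotvNl !dotvZl !dotvDr ?dotvNr !dotvZr.
by rewrite (dotv_mulmx_sym _ v u hM); ring.
Qed.

Lemma normr_mulmx_le M : exists S, 0 <= S /\ forall u, `|u *m M| <= S * `|u|.
Proof.
exists (\sum_k \sum_j `|M k j|); split.
  by apply: sumr_ge0 => k _; apply: sumr_ge0.
move=> u; apply: normr_rv_le.
  by apply: mulr_ge0; [apply: sumr_ge0 => k _; apply: sumr_ge0 | ].
move=> j; rewrite mxE; apply: le_trans (ler_norm_sum _ _ _) _.
rewrite mulr_suml; apply: ler_sum => k _; rewrite normrM mulrC.
apply: ler_pM => //; last exact: normr_rv_coord.
by rewrite (bigD1 j) //= lerDl; apply: sumr_ge0.
Qed.

Lemma ler_norm_dotv_mulmx M : exists C, 0 <= C /\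
  forall u v, `|dotv (u *m M) v| <= C * `|u| * `|v|.
Proof.
have [S [S0 hS]] := normr_mulmx_le M.
exists (n%:R * S); split; first exact: mulr_ge0.
move=> u v; apply: le_trans (ler_norm_dotv _ _) _.
by rewrite -!mulrA; apply: ler_wpM2l => //; rewrite mulrA; apply: ler_wpM2r.
Qed.

End QuadraticForms.

Section PositiveDefinite.
Context {R : realType} {n : nat} {A : 'M[R]_n}.
Hypothesis hA : posdef_sym A.

Lemma posdef_sym_unitmx : A \in unitmx.
Proof.
rewrite unitmxE unitfE; apply/negP => /det0P [v v0 vA].
by have := hA.2 v v0; rewrite /qform vA dotv0l ltxx.
Qed.

Lemma posdef_sym_trmx_inv : (invmx A)^T = invmx A.
Proof. by rewrite trmx_inv hA.1. Qed.

Lemma qform_posdef_ge0 v : 0 <= qform A v.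
Proof.
have [->|v0] := eqVneq v 0; first by rewrite qform0.
exact: ltW (hA.2 v v0).
Qed.

(* Fenchel-Young for the quadratic form: expand 0 <= qform A (q - w A^-1) *)
Lemma dotv_le_qform_invmx (q w : 'rV[R]_n) :
  dotv q w <= qform A q / 2 + qform (invmx A) w / 2.
Proof.
have := qform_posdef_ge0 (q - w *m invmx A).
rewrite /qform mulmxBl mulmxKV; last exact: posdef_sym_unitmx.
rewrite !dotvBl !dotvBr.
have -> : dotv (q *m A) (w *m invmx A) = dotv q w.
  by rewrite dotv_mulmxl hA.1 mulmxKV //; exact: posdef_sym_unitmx.
rewrite (dotvC w q) (dotvC w (w *m _)); lra.
Qed.

Lemma posdef_sym_coercive : exists c, 0 < c /\ forall v, `|v| ^+ 2 <= c * qform A v.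
Proof.
pose cj (j : 'I_n) := qform (invmx A) (unit_rv j).
set c := 1 + \sum_j `|cj j|.
have s0 : 0 <= \sum_j `|cj j| by apply: sumr_ge0.
have c0 : 0 < c by rewrite /c; lra.
exists c; split => // v.
(* Fenchel-Young against the vector (v_j / c) e_j bounds each coordinate *)
have coord j : v 0 j ^+ 2 <= c * qform A v.
  set a := v 0 j.
  have cjc : cj j <= c.
    have rest : 0 <= \sum_(i < n | i != j) `|cj i| by apply: sumr_ge0.
    have := ler_norm (cj j); rewrite /c (bigD1 j) //=; lra.
  have := dotv_le_qform_invmx v ((a / c) *: unit_rv j).
  rewrite dotvZr dotv_delta qformZ -/(cj j) -/a => fy.
  have : (a / c) ^+ 2 * cj j <= (a / c) ^+ 2 * c by rewrite ler_wpM2l // sqr_ge0.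
  have -> : (a / c) ^+ 2 * c = a * (a / c) by rewrite expr2; field; rewrite gt_eqF.
  move=> h; have : a * (a / c) <= qform A v by lra.
  move=> /(ler_wpM2l (ltW c0)); congr (_ <= _).
  by rewrite expr2; field; rewrite gt_eqF.
have [->|[j ->]] := normr_rv_attained v.
  by rewrite normr0 expr0n /= mulr_ge0 ?qform_posdef_ge0 // ltW.
by rewrite real_normK ?num_real.
Qed.

End PositiveDefinite.

Section LipschitzOnBalls.
Context {R : realType} {n : nat}.
Implicit Types f g : 'rV[R]_n -> R.

Definition lipschitz_on_balls f := forall rho, 0 <= rho -> exists C, 0 <= C /\
  forall x y, `|x| <= rho -> `|y| <= rho -> `|f x - f y| <= C * `|x - y|.

Lemma lipschitz_on_ballsD f g :
  lipschitz_on_balls f -> lipschitz_on_balls g -> lipschitz_on_balls (fun p => f p + g p).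
Proof.
move=> hf hg rho r0; have [C [C0 hC]] := hf rho r0; have [D [D0 hD]] := hg rho r0.
exists (C + D); split; first exact: addr_ge0.
move=> x y hx hy; have := hC x y hx hy; have := hD x y hx hy.
have -> : f x + g x - (f y + g y) = (f x - f y) + (g x - g y) by ring.
by move=> h1 h2; apply: le_trans (ler_normD _ _) _; rewrite mulrDl; lra.
Qed.

Lemma lipschitz_on_ballsZ c f :
  lipschitz_on_balls f -> lipschitz_on_balls (fun p => c * f p).
Proof.
move=> hf rho r0; have [C [C0 hC]] := hf rho r0.
exists (`|c| * C); split; first exact: mulr_ge0.
by move=> x y hx hy; rewrite -mulrBr normrM -mulrA ler_wpM2l // hC.
Qed.

Lemma convex_lipschitz_on_balls f : convex_fun f -> lipschitz_on_balls f.
Proof. by move=> hf rho; apply: convex_fun_ball_lipschitz. Qed.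

Lemma lipschitz_on_balls_dotv x : lipschitz_on_balls (fun p => dotv p x).
Proof.
move=> rho r0; exists (n%:R * `|x|); split; first exact: mulr_ge0.
move=> p q _ _; rewrite -dotvBl; apply: le_trans (ler_norm_dotv _ _) _.
by rewrite -mulrA [`|p - q| * _]mulrC mulrA.
Qed.

Lemma lipschitz_on_balls_qform (M : 'M[R]_n) : M^T = M -> lipschitz_on_balls (qform M).
Proof.
move=> hM rho r0; have [C [C0 hC]] := ler_norm_dotv_mulmx M.
exists (C * (2 * rho)); split; first by apply: mulr_ge0 => //; lra.
move=> p q hp hq.
have -> : qform M p - qform M q = dotv ((p - q) *m M) (p + q).
  by rewrite /qform mulmxBl dotvBl !dotvDr (dotv_mulmx_sym _ q p hM); ring.
apply: le_trans (hC _ _) _.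
rewrite (_ : C * _ * _ = C * `|p + q| * `|p - q|); last by ring.
apply: ler_wpM2r => //; apply: ler_wpM2l => //.
by apply: le_trans (ler_normD _ _) _; lra.
Qed.

Lemma lipschitz_on_balls_continuous f : lipschitz_on_balls f -> continuous f.
Proof.
move=> hf; apply: locally_lipschitz_continuous => x.
have [C [C0 hC]] := hf (`|x| + 1) (ltac:(have := normr_ge0 x; lra)).
exists 1, C; split => //; split => // y hy; apply: hC.
  by have := ler_normD (y - x) x; rewrite subrK; lra.
by have := normr_ge0 x; lra.
Qed.

Lemma lipschitz_on_balls_uniform k (F : 'I_k -> 'rV[R]_n -> R) :
  (forall i, lipschitz_on_balls (F i)) ->
  forall rho, 0 <= rho -> exists C, 0 <= C /\ forall i x y,
    `|x| <= rho -> `|y| <= rho -> `|F i x - F i y| <= C * `|x - y|.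
Proof.
move=> hF rho r0; have [c hc] := choice (fun i => hF i rho r0).
exists (\sum_i c i); split; first by apply: sumr_ge0 => i _; case: (hc i).
move=> i x y hx hy; have [c0 hci] := hc i; apply: le_trans (hci x y hx hy) _.
apply: ler_wpM2r => //; rewrite (bigD1 i) //= lerDl.
by apply: sumr_ge0 => j _; case: (hc j).
Qed.

End LipschitzOnBalls.

Section StrongConvexity.
Context {R : realType} {n : nat} {A : 'M[R]_n}.
Hypothesis hA : posdef_sym A.
Implicit Types f : 'rV[R]_n -> R.

Lemma hess_ge_convex_comb f a b t : hess_ge f A -> 0 <= t -> t <= 1 ->
  f (t *: a + (1 - t) *: b) <=
  t * f a + (1 - t) * f b - t * (1 - t) / 2 * qform A (a - b).
Proof.
move=> hf t0 t1; have := convex_funP hf a b t t0 t1.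
by rewrite /= (qform_convex_comb _ a b t hA.1); lra.
Qed.

Lemma hess_geB_dotv f x : hess_ge f A -> hess_ge (fun p => f p - dotv p x) A.
Proof. by move=> hf y z t ht; have := hf y z t ht; rewrite /= dotvDl !dotvZl; lra. Qed.

Lemma hess_ge_argmin_growth : exists k, 0 < k /\ forall f p, hess_ge f A ->
  (forall q, f p <= f q) -> forall q, k * `|q - p| ^+ 2 <= f q - f p.
Proof.
have [c [c0 hc]] := posdef_sym_coercive hA.
exists (4 * c)^-1; split; first by rewrite invr_gt0 mulr_gt0.
move=> f p hf pmin q.
have := pmin ((1/2) *: q + (1 - 1/2) *: p).
have := hess_ge_convex_comb f q p (1/2) hf (ltac:(lra)) (ltac:(lra)).
move=> mid pmid; have : qform A (q - p) / 4 <= f q - f p by lra.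
apply: le_trans; rewrite ler_pdivrMl ?mulr_gt0 //.
by have := hc (q - p); lra.
Qed.

Section Conjugate.
Variables (f : 'rV[R]_n -> R) (pm : 'rV[R]_n -> 'rV[R]_n).
Hypothesis pm_max : forall x q, dotv q x - f q <= dotv (pm x) x - f (pm x).

Lemma conjugate_convex : convex_fun (fun x => dotv (pm x) x - f (pm x)).
Proof.
move=> x y t /andP[t0 t1] /=; set pw := pm _.
rewrite dotvDr !dotvZr.
have := ler_wpM2l t0 (pm_max x pw).
have := ler_wpM2l (ltac:(lra) : 0 <= 1 - t) (pm_max y pw); lra.
Qed.

(* at w = t x + (1 - t) y, test the strongly convex f against the combination
   of the maximisers at x and y, then close with Fenchel-Young *)
Lemma conjugate_hess_le : hess_ge f A ->
  hess_le (fun x => dotv (pm x) x - f (pm x)) (invmx A).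
Proof.
move=> hf x y t /andP[t0 t1] /=.
set px := pm x; set py := pm y; set w := t *: x + (1 - t) *: y.
have hm := pm_max w (t *: px + (1 - t) *: py).
have hk := hess_ge_convex_comb f px py t hf t0 t1.
have tt : 0 <= t * (1 - t) by apply: mulr_ge0; lra.
have fy := ler_wpM2l tt (dotv_le_qform_invmx hA (px - py) (x - y)).
have qc := qform_convex_comb (invmx A) x y t (posdef_sym_trmx_inv hA).
rewrite /w in hm qc *.
rewrite dotvDl !dotvZl !dotvDr !dotvZr in hm.
rewrite !dotvBl !dotvBr in fy.
rewrite qc dotvDr !dotvZr; lra.
Qed.

End Conjugate.

End StrongConvexity.

Section MaximiserPerturbation.
Context {R : realFieldType} {V : normedModType R}.

Lemma argmax_perturbation (g0 g1 : V -> R) p0 p1 k C : 0 < k -> 0 <= C ->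
  (forall q, k * `|q - p0| ^+ 2 <= g0 p0 - g0 q) ->
  (forall q, k * `|q - p1| ^+ 2 <= g1 p1 - g1 q) ->
  `|(g1 p1 - g0 p1) - (g1 p0 - g0 p0)| <= C * `|p1 - p0| ->
  `|p1 - p0| <= C / (2 * k) /\ 0 <= g1 p1 - g1 p0 <= C ^+ 2 / (2 * k).
Proof.
move=> k0 C0 h0 h1 hC.
have {h0} := h0 p1; have {h1} := h1 p0; rewrite distrC; set D := `|p1 - p0|.
move=> h1 h0; have D0 : 0 <= D := normr_ge0 _.
have k2 : 0 < 2 * k by rewrite mulr_gt0.
have kD : 0 <= k * D ^+ 2 by rewrite mulr_ge0 ?sqr_ge0 // ltW.
have hd : g1 p1 - g0 p1 - (g1 p0 - g0 p0) <= C * D := le_trans (ler_norm _) hC.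
have DC : D <= C / (2 * k).
  have [->|Dn0] := eqVneq D 0; first by rewrite divr_ge0 // ltW.
  have Dp : 0 < D by rewrite lt_neqAle eq_sym Dn0 D0.
  rewrite ler_pdivlMr // -(ler_pM2l Dp).
  have -> : D * (D * (2 * k)) = 2 * k * D ^+ 2 by rewrite expr2; ring.
  by rewrite [D * C]mulrC; lra.
split => //; apply/andP; split; first lra.
apply: le_trans (_ : C * D <= _); first lra.
by rewrite expr2 -mulrA ler_wpM2l.
Qed.

End MaximiserPerturbation.

Section CoerciveMaximum.
Context {R : realType} {n : nat}.

Lemma continuous_coercive_argmax (f : 'rV[R]_n -> R) r : 0 < r -> continuous f ->
  (forall p, r < `|p| -> f p < f 0) -> exists p, forall q, f q <= f p.
Proof.
move=> r0 fc far; set B := closed_ball (0 : 'rV[R]_n) r.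
have inB0 q : B q = (`|q| <= r).
  by rewrite /B closed_ballE // /closed_ball_ /= sub0r normrN.
have inB q : (q \in B) = (`|q| <= r).
  by apply/idP/idP => [/set_mem|h]; [rewrite inB0 | apply: mem_set; rewrite inB0].
have B0 : B !=set0 by exists 0; apply: closed_ballxx.
have Bc : compact B.
  apply: bounded_closed_compact; last exact: closed_ball_closed.
  exists r; split; first by rewrite num_real.
  by move=> M hM q /=; rewrite inB0; lra.
have [p _ pmax] := EVT_max_rV B0 Bc (continuous_subspaceT fc).
exists p => q; have [qr|qr] := lerP `|q| r; first by apply: pmax; rewrite inB.
by apply: le_trans (ltW (far q qr)) _; apply: pmax; rewrite inB normr0 ltW.
Qed.

End CoerciveMaximum.

Section Hamiltonian.
Context {R : realType} {d m : nat} {H1 H2 H : 'I_m -> 'rV[R]_d -> R}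
  {gamma : R} {A : 'M[R]_d} {L : 'rV[R]_d -> R}.
Hypotheses (hH1 : forall i, convex_fun (H1 i)) (hH2 : forall i, convex_fun (H2 i))
  (hH : forall i p, H i p = H1 i p - H2 i p)
  (hgamma : 0 < gamma) (hA : posdef_sym A) (hL : hess_ge L A).

Local Notation Phi2 z := (Phi L gamma H1 H2 H z.1 z.2).

Definition box (tau : 'rV[R]_m) := forall i, `|tau 0 i| <= gamma.

Definition cost (tau : 'rV[R]_m) p :=
  L p + gamma * Gsum H1 H2 p - \sum_(i < m) tau 0 i * H i p.

Definition objective (z : 'rV[R]_d * 'rV[R]_m) p := dotv p z.1 - cost z.2 p.

(* on the box the weights gamma -+ tau_i are nonnegative, which makes
   [cost tau] A-strongly convex *)
Lemma cost_decomp tau p : cost tau p = (L p - qform A p / 2) +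
  \sum_(i < m) ((gamma - tau 0 i) * H1 i p + (gamma + tau 0 i) * H2 i p) + qform A p / 2.
Proof.
rewrite /cost /Gsum mulr_sumr.
have <- : \sum_(i < m) gamma * (H1 i p + H2 i p) - \sum_(i < m) tau 0 i * H i p =
    \sum_(i < m) ((gamma - tau 0 i) * H1 i p + (gamma + tau 0 i) * H2 i p).
  by rewrite -sumrB; apply: eq_bigr => i _; rewrite hH; ring.
ring.
Qed.

Lemma box_weights tau i : box tau ->
  0 <= gamma - tau 0 i <= 2 * gamma /\ 0 <= gamma + tau 0 i <= 2 * gamma.
Proof.
by move=> /(_ i); rewrite ler_norml => /andP[? ?]; split; apply/andP; split; lra.
Qed.

Lemma cost_hess_ge tau : box tau -> hess_ge (cost tau) A.
Proof.
move=> ht; rewrite /hess_ge (_ : (fun p => _) = fun p => (L p - qform A p / 2) +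
    \sum_(i < m) ((gamma - tau 0 i) * H1 i p + (gamma + tau 0 i) * H2 i p)).
  apply: convex_funD => //; apply: convex_fun_sum => i.
  have [/andP[w1 _] /andP[w2 _]] := box_weights _ i ht.
  by apply: convex_funD; apply: convex_funZ.
by apply: funext => p; rewrite cost_decomp; ring.
Qed.

Lemma cost_bounds : exists a b, 0 <= a /\ 0 <= b /\ forall tau, box tau ->
  cost tau 0 <= a /\ forall p, qform A p / 2 - a - b * `|p| <= cost tau p.
Proof.
have [b0 [b00 hb0]] := convex_fun_affine_minorant _ hL.
have [b1 hb1] := choice (fun i => convex_fun_affine_minorant _ (hH1 i)).
have [b2 hb2] := choice (fun i => convex_fun_affine_minorant _ (hH2 i)).
set L0 := L 0 - qform A 0 / 2.
set a0 := \sum_(i < m) 2 * gamma * (`|H1 i 0| + `|H2 i 0|).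
set bs := \sum_(i < m) 2 * gamma * (b1 i + b2 i).
have g0 : 0 <= 2 * gamma by rewrite mulr_ge0 // ltW.
have a00 : 0 <= a0 by apply: sumr_ge0 => i _; rewrite mulr_ge0 ?addr_ge0.
have bs0 : 0 <= bs.
  apply: sumr_ge0 => i _; rewrite mulr_ge0 ?addr_ge0 //.
    by case: (hb1 i).
  by case: (hb2 i).
exists (`|L0| + a0), (b0 + bs); split; first by rewrite addr_ge0.
split; first exact: addr_ge0.
move=> tau ht; split.
  rewrite cost_decomp -/L0 qform0 mul0r addr0; apply: lerD; first exact: ler_norm.
  apply: ler_sum => i _; have [w1 w2] := box_weights _ i ht.
  by rewrite mulrDr; apply: lerD; apply: ler_scaled_norm.
move=> p; have np := normr_ge0 p.
have sum_lb : - a0 - bs * `|p| <=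
    \sum_(i < m) ((gamma - tau 0 i) * H1 i p + (gamma + tau 0 i) * H2 i p).
  rewrite /a0 /bs mulr_suml -sumrN -sumrB; apply: ler_sum => i _.
  have [w1 w2] := box_weights _ i ht.
  have [b10 h1] := hb1 i; have [b20 h2] := hb2 i.
  have := ler_scaled_minorant _ _ _ _ _ _ w1 b10 np (h1 p).
  have := ler_scaled_minorant _ _ _ _ _ _ w2 b20 np (h2 p); lra.
have := hb0 p; rewrite -/L0 cost_decomp.
have := ler_norm (- L0); rewrite normrN.
have := mulr_ge0 b00 np; have := mulrDl b0 bs `|p|; lra.
Qed.

Lemma objective_continuous z : box z.2 -> continuous (objective z).
Proof.
move=> hz; apply: lipschitz_on_balls_continuous.
have -> : objective z = fun p => dotv p z.1 +
    ((-1) * (cost z.2 p - qform A p / 2) + (- (1/2)) * qform A p).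
  by apply: funext => p; rewrite /objective; ring.
apply: lipschitz_on_ballsD; first exact: lipschitz_on_balls_dotv.
apply: lipschitz_on_ballsD; apply: lipschitz_on_ballsZ.
  exact/convex_lipschitz_on_balls/cost_hess_ge.
exact/lipschitz_on_balls_qform/hA.1.
Qed.

Lemma objective_far X : 0 <= X -> exists r, 0 < r /\ forall z p,
  box z.2 -> `|z.1| <= X -> r < `|p| -> objective z p < objective z 0.
Proof.
move=> X0; have [a [b [a0 [b0 hab]]]] := cost_bounds.
have [c [c0 hc]] := posdef_sym_coercive hA.
set B := 2 * c * (d%:R * X + b); set E := 4 * c * a.
have B0 : 0 <= B.
  by apply: mulr_ge0; [apply: mulr_ge0; lra | rewrite addr_ge0 // mulr_ge0].
have E0 : 0 <= E by apply: mulr_ge0 => //; apply: mulr_ge0; lra.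
exists (1 + B + E); split; first lra.
move=> z p hz hx hp; rewrite ltNge; apply/negP.
have [ha /(_ p) hb] := hab _ hz.
have hd : dotv p z.1 <= d%:R * X * `|p|.
  have := ler_wpM2l (mulr_ge0 (ler0n _ d) (normr_ge0 p)) hx.
  have := le_trans (ler_norm _) (ler_norm_dotv p z.1); lra.
rewrite /objective dotv0l => h0.
have hQ : qform A p <= 2 * (d%:R * X + b) * `|p| + 4 * a by lra.
have : `|p| ^+ 2 <= B * `|p| + E.
  by apply: le_trans (hc p) _; have := ler_wpM2l (ltW c0) hQ; rewrite /B /E; lra.
by move=> /(le_of_sqr_le_linear _ _ _ B0 E0); lra.
Qed.

Definition argmax z := xget 0 [set p | forall q, objective z q <= objective z p].

Lemma argmax_max z : box z.2 -> forall q, objective z q <= objective z (argmax z).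
Proof.
move=> hz; have [r [r0 far]] := objective_far _ (normr_ge0 z.1).
have ex : exists p, forall q, objective z q <= objective z p.
  apply: (continuous_coercive_argmax _ _ r0 (objective_continuous _ hz)).
  by move=> p; apply: far.
exact: (xgetPex 0 ex).
Qed.

Lemma argmax_bounded X : 0 <= X ->
  exists r, 0 <= r /\ forall z, box z.2 -> `|z.1| <= X -> `|argmax z| <= r.
Proof.
move=> X0; have [r [r0 far]] := objective_far _ X0; exists r; split => [|z hz hx].
  exact: ltW.
by rewrite leNgt; apply/negP => /(far z _ hz hx); rewrite ltNge argmax_max.
Qed.

Lemma PhiE z : box z.2 -> Phi2 z = objective z (argmax z).
Proof.
move=> hz; rewrite /Phi (_ : [set y | _] = range (objective z)); last first.
  apply/seteqP; split => y.
    by move=> [p ->]; exists p => //; rewrite /objective /cost; ring.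
  by move=> [p _ <-]; exists p; rewrite /objective /cost; ring.
have ub : ubound (range (objective z)) (objective z (argmax z)).
  by move=> y [p _ <-]; apply: argmax_max.
apply/eqP; rewrite eq_le; apply/andP; split.
  by apply: ge_sup => //; exists (objective z 0), 0.
apply: sup_upper_bound; last by exists (argmax z).
by split; [exists (objective z 0), 0 | exists (objective z (argmax z))].
Qed.

Lemma argmax_growth : exists k, 0 < k /\ forall z, box z.2 ->
  forall q, k * `|q - argmax z| ^+ 2 <= objective z (argmax z) - objective z q.
Proof.
have [k [k0 hk]] := hess_ge_argmin_growth hA.
exists k; split => // z hz q.
have amin q' : cost z.2 (argmax z) - dotv (argmax z) z.1 <= cost z.2 q' - dotv q' z.1.
  by have := argmax_max _ hz q'; rewrite /objective; lra.
have := hk _ _ (hess_geB_dotv _ z.1 (cost_hess_ge _ hz)) amin q.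
by rewrite /objective; lra.
Qed.

Definition dPhi p (h : 'rV[R]_d * 'rV[R]_m) := dotv p h.1 + \sum_(i < m) h.2 0 i * H i p.

Lemma objective_shift z w p : objective w p - objective z p = dPhi p (w - z).
Proof.
rewrite /objective /cost /dPhi /= dotvBr.
have -> : \sum_(i < m) (w.2 - z.2) 0 i * H i p =
    \sum_(i < m) w.2 0 i * H i p - \sum_(i < m) z.2 0 i * H i p.
  by rewrite -sumrB; apply: eq_bigr => i _; rewrite !mxE; ring.
ring.
Qed.

Lemma dPhi0 p : dPhi p 0 = 0.
Proof. by rewrite /dPhi dotv0r add0r big1 // => i _; rewrite mxE mul0r. Qed.

Lemma dPhiDZ p t u v : dPhi p (t *: u + v) = t * dPhi p u + dPhi p v.
Proof.
rewrite /dPhi /= dotvDr dotvZr.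
have -> : \sum_(i < m) (t *: u.2 + v.2) 0 i * H i p =
    t * \sum_(i < m) u.2 0 i * H i p + \sum_(i < m) v.2 0 i * H i p.
  by rewrite mulr_sumr -big_split; apply: eq_bigr => i _; rewrite !mxE mulrDl -mulrA.
ring.
Qed.

Lemma dPhiZ p t u : dPhi p (t *: u) = t * dPhi p u.
Proof. by have := dPhiDZ p t u 0; rewrite !addr0 dPhi0 addr0. Qed.

Lemma dPhi_linear p : linear (dPhi p).
Proof. by move=> t u v; rewrite dPhiDZ. Qed.

Lemma dPhi_bounded p : exists C, forall h, `|dPhi p h| <= C * `|h|.
Proof.
exists (d%:R * `|p| + \sum_(i < m) `|H i p|) => h.
have h1 := normr_fst_le h; have h2 := normr_snd_le h.
apply: le_trans (ler_normD _ _) _; rewrite mulrDl; apply: lerD.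
  apply: le_trans (ler_norm_dotv _ _) _.
  by apply: ler_wpM2l => //; apply: mulr_ge0.
apply: le_trans (ler_norm_sum _ _ _) _; rewrite mulr_suml.
apply: ler_sum => i _; rewrite normrM mulrC; apply: ler_wpM2l => //.
exact: le_trans (normr_rv_coord h.2 i) h2.
Qed.

Lemma H_lipschitz rho : 0 <= rho -> exists C, 0 <= C /\ forall i p q,
  `|p| <= rho -> `|q| <= rho -> `|H i p - H i q| <= C * `|p - q|.
Proof.
apply: lipschitz_on_balls_uniform => i.
have -> : H i = fun p => H1 i p + (-1) * H2 i p.
  by apply: funext => p; rewrite hH; ring.
apply: lipschitz_on_ballsD; first exact: convex_lipschitz_on_balls.
by apply: lipschitz_on_ballsZ; exact: convex_lipschitz_on_balls.
Qed.

Lemma dPhi_lipschitz rho : 0 <= rho -> exists C, 0 <= C /\ forall p q h,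
  `|p| <= rho -> `|q| <= rho -> `|dPhi p h - dPhi q h| <= C * `|p - q| * `|h|.
Proof.
move=> r0; have [CH [CH0 hCH]] := H_lipschitz _ r0.
exists (d%:R + m%:R * CH); split; first by rewrite addr_ge0 ?mulr_ge0.
move=> p q h hp hq.
have h1 := normr_fst_le h; have h2 := normr_snd_le h.
have -> : dPhi p h - dPhi q h =
    dotv (p - q) h.1 + \sum_(i < m) h.2 0 i * (H i p - H i q).
  rewrite /dPhi dotvBl.
  have -> : \sum_(i < m) h.2 0 i * (H i p - H i q) =
      \sum_(i < m) h.2 0 i * H i p - \sum_(i < m) h.2 0 i * H i q.
    by rewrite -sumrB; apply: eq_bigr => i _; ring.
  ring.
rewrite !mulrDl; apply: le_trans (ler_normD _ _) _; apply: lerD.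
  apply: le_trans (ler_norm_dotv _ _) _.
  by apply: ler_wpM2l => //; apply: mulr_ge0.
apply: le_trans (ler_norm_sum _ _ _) _.
have -> : m%:R * CH * `|p - q| * `|h| = \sum_(i < m) (`|h| * (CH * `|p - q|)).
  by rewrite sumr_const card_ord -mulr_natl; ring.
apply: ler_sum => i _; rewrite normrM; apply: ler_pM => //.
  exact: le_trans (normr_rv_coord h.2 i) h2.
exact: hCH.
Qed.

Lemma Phi_expansion X : 0 <= X -> exists K, 0 <= K /\ forall z w,
  box z.2 -> box w.2 -> `|z.1| <= X -> `|w.1| <= X ->
  `|argmax w - argmax z| <= K * `|w - z| /\
  `|Phi2 w - Phi2 z - dPhi (argmax z) (w - z)| <= K * `|w - z| ^+ 2.
Proof.
move=> X0; have [r [r0 hr]] := argmax_bounded _ X0.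
have [k [k0 hk]] := argmax_growth.
have [C [C0 hC]] := dPhi_lipschitz _ r0.
have k2 : 0 < 2 * k by rewrite mulr_gt0.
have hK : C / (2 * k) <= (C + C ^+ 2) / (2 * k).
  by apply: ler_wpM2r; [rewrite invr_ge0 ltW | rewrite lerDl sqr_ge0].
have hK2 : C ^+ 2 / (2 * k) <= (C + C ^+ 2) / (2 * k).
  by apply: ler_wpM2r; [rewrite invr_ge0 ltW | rewrite lerDr].
exists ((C + C ^+ 2) / (2 * k)); split.
  by apply: le_trans hK; rewrite divr_ge0 // ltW.
move=> z w hz hw hzX hwX; set N := `|w - z|; have N0 : 0 <= N := normr_ge0 _.
have [bz bw] := (hr z hz hzX, hr w hw hwX).
have hd : `|objective w (argmax w) - objective z (argmax w) -
    (objective w (argmax z) - objective z (argmax z))| <= C * N * `|argmax w - argmax z|.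
  rewrite !objective_shift -/N; apply: le_trans (hC _ _ _ bw bz) _.
  by rewrite mulrAC.
have [hp /andP[hv0 hv]] := argmax_perturbation (objective z) (objective w)
  (argmax z) (argmax w) k (C * N) k0 (mulr_ge0 C0 N0) (hk z hz) (hk w hw) hd.
split; first by apply: le_trans hp _; rewrite mulrAC ler_wpM2r.
rewrite (PhiE _ hz) (PhiE _ hw) -objective_shift.
rewrite (_ : _ - _ - _ = objective w (argmax w) - objective w (argmax z)); last by ring.
rewrite ger0_norm //; apply: le_trans hv _.
by rewrite exprMn mulrAC ler_wpM2r // sqr_ge0.
Qed.

Lemma dPhi_argmax_lipschitz X : 0 <= X -> exists K, forall z w h,
  box z.2 -> box w.2 -> `|z.1| <= X -> `|w.1| <= X ->
  `|dPhi (argmax w) h - dPhi (argmax z) h| <= K * `|w - z| * `|h|.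
Proof.
move=> X0; have [r [r0 hr]] := argmax_bounded _ X0.
have [C [C0 hC]] := dPhi_lipschitz _ r0; have [K [K0 hK]] := Phi_expansion _ X0.
exists (C * K) => z w h hz hw hzX hwX.
apply: le_trans (hC _ _ h (hr w hw hwX) (hr z hz hzX)) _.
rewrite -!mulrA ler_wpM2l // mulrA ler_wpM2r //.
by have [] := hK z w hz hw hzX hwX.
Qed.

Lemma box_strict (tau : 'rV[R]_m) : (forall i, - gamma < tau 0 i < gamma) -> box tau.
Proof. by move=> ht i; rewrite ler_norml; have /andP[h1 h2] := ht i; rewrite !ltW. Qed.

Lemma Omega_nbhs (z : 'rV[R]_d * 'rV[R]_m) : Omega gamma z ->
  exists r, 0 < r /\ forall h, `|h| < r -> box (h + z).2.
Proof.
move=> hz; set mg := \big[Num.max/0]_(i < m) `|z.2 0 i|.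
have mgl : mg < gamma by apply: bigmax_lt => // i _; rewrite ltr_norml; exact: hz.
exists (gamma - mg); split => [|h hh i]; first lra.
rewrite /= mxE; apply: le_trans (ler_normD _ _) _.
have := le_trans (normr_rv_coord h.2 i) (normr_snd_le h).
have : `|z.2 0 i| <= mg by apply: (le_bigmax _ (fun i => `|z.2 0 i|) i).
lra.
Qed.

Lemma Phi_quadratic_approx z : Omega gamma z -> exists r K, 0 < r /\ 0 <= K /\
  forall h, `|h| < r -> `|Phi2 (h + z) - Phi2 z - dPhi (argmax z) h| <= K * `|h| ^+ 2.
Proof.
move=> hz; have [r0 [r00 hr0]] := Omega_nbhs _ hz.
have X0 : 0 <= `|z.1| + 1 by have := normr_ge0 z.1; lra.
have [K [K0 hK]] := Phi_expansion _ X0.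
exists (Num.min r0 1), K; split; first by rewrite lt_min r00 ltr01.
split => // h; rewrite lt_min => /andP[h0 h1].
have hX : `|(h + z).1| <= `|z.1| + 1.
  by apply: le_trans (ler_normD _ _) _; have := normr_fst_le h; lra.
have [_] := hK z (h + z) (box_strict _ hz) (hr0 _ h0) (ltac:(lra)) hX.
by rewrite addrK.
Qed.

Lemma derive_Phi z v : Omega gamma z ->
  derive (fun z => Phi2 z) z v = dPhi (argmax z) v.
Proof.
move=> hz; have [r [K [r0 [K0 hK]]]] := Phi_quadratic_approx _ hz.
exact: (derive_quadratic_approx (fun z => Phi2 z) z _ r K r0 K0 hK v (dPhiZ _)).
Qed.

Lemma differentiable_Phi z : Omega gamma z -> differentiable (fun z => Phi2 z) z.
Proof.
move=> hz; have [r [K [r0 [K0 hK]]]] := Phi_quadratic_approx _ hz.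
have [C hC] := dPhi_bounded (argmax z).
exact: (differentiable_quadratic_approx (fun z => Phi2 z) z _ r K r0 K0 hK C
  (dPhi_linear _) hC).
Qed.

Lemma Phi_C11 : C11 (fun z => Phi2 z) (Omega gamma).
Proof.
split; first exact: differentiable_Phi.
move=> z0 hz0; have X0 : 0 <= `|z0.1| + 1 by have := normr_ge0 z0.1; lra.
have [K hK] := dPhi_argmax_lipschitz _ X0.
have near u : ball z0 1 u -> `|u.1| <= `|z0.1| + 1.
  rewrite -ball_normE /ball_ /= => hu; have := normr_fst_le (z0 - u).
  have := ler_normD (u.1 - z0.1) z0.1; rewrite subrK distrC /=; lra.
exists 1; split => //; exists K => z w v hz hw bz bw.
rewrite !derive_Phi //.
exact: hK w z v (box_strict _ hw) (box_strict _ hz) (near _ bw) (near _ bz).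
Qed.

Lemma derive_Phi_x x tau v : Omega gamma (x, tau) ->
  derive (fun y => Phi L gamma H1 H2 H y tau) x v = dotv (argmax (x, tau)) v.
Proof.
move=> hz; have [r [K [r0 [K0 hK]]]] := Phi_quadratic_approx _ hz.
apply: (derive_quadratic_approx (fun y => Phi L gamma H1 H2 H y tau) x _ r K r0 K0).
  move=> h hh; move: (hK (h, 0)); rewrite normr_pair0r /dPhi /=.
  rewrite big1 => [|i _]; last by rewrite mxE mul0r.
  by rewrite addr0 add0r => /(_ hh).
by move=> t u; rewrite dotvZr.
Qed.

Lemma derive_Phi_tau x tau v : Omega gamma (x, tau) ->
  derive (fun t => Phi L gamma H1 H2 H x t) tau v =
  \sum_(i < m) v 0 i * H i (argmax (x, tau)).
Proof.
move=> hz; have [r [K [r0 [K0 hK]]]] := Phi_quadratic_approx _ hz.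
apply: (derive_quadratic_approx (fun t => Phi L gamma H1 H2 H x t) tau
  (fun u => \sum_(i < m) u 0 i * H i (argmax (x, tau))) r K r0 K0).
  move=> h hh; move: (hK (0, h)); rewrite normr_pair0l /dPhi /= dotv0r.
  by rewrite !add0r => /(_ hh).
by move=> t u; rewrite mulr_sumr; apply: eq_bigr => i _; rewrite mxE mulrA.
Qed.

Lemma gradx_Phi x tau : Omega gamma (x, tau) ->
  gradx (Phi L gamma H1 H2 H) x tau = argmax (x, tau).
Proof. by move=> hz; apply/rowP => j; rewrite mxE derive_Phi_x // dotv_delta. Qed.

Lemma PhiE_conjugate tau : box tau -> (fun x => Phi L gamma H1 H2 H x tau) =
  fun x => dotv (argmax (x, tau)) x - cost tau (argmax (x, tau)).
Proof. by move=> ht; apply: funext => x; rewrite (PhiE (x, tau) ht). Qed.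

Lemma Phi_convex tau : box tau -> convex_fun (fun x => Phi L gamma H1 H2 H x tau).
Proof.
move=> ht; rewrite PhiE_conjugate //.
by apply: conjugate_convex => x q; exact: (argmax_max (x, tau) ht q).
Qed.

Lemma Phi_hess_le tau : box tau ->
  hess_le (fun x => Phi L gamma H1 H2 H x tau) (invmx A).
Proof.
move=> ht; rewrite PhiE_conjugate //; apply: (conjugate_hess_le hA).
  by move=> x q; exact: (argmax_max (x, tau) ht q).
exact: cost_hess_ge.
Qed.

End Hamiltonian.

Theorem lemma2p4 (R : realType) (d m : nat)
  (H1 H2 H : 'I_m -> 'rV[R]_d -> R)
  (hH1 : forall i, convex_fun (H1 i)) (hH2 : forall i, convex_fun (H2 i))
  (hH : forall i p, H i p = H1 i p - H2 i p)
  (gamma : R) (hgamma : 0 < gamma)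
  (A : 'M[R]_d) (hA : posdef_sym A)
  (L : 'rV[R]_d -> R) (hL : hess_ge L A) :
  let F := Phi L gamma H1 H2 H in
  C11 (fun z : 'rV[R]_d * 'rV[R]_m => F z.1 z.2) (Omega gamma) /\
  (forall tau : 'rV[R]_m, (forall i, - gamma < tau 0 i < gamma) ->
     convex_fun (fun x => F x tau) /\ hess_le (fun x => F x tau) (invmx A)) /\
  (forall (x : 'rV[R]_d) (tau : 'rV[R]_m), (forall i, - gamma < tau 0 i < gamma) ->
     forall i : 'I_m,
       derive (fun t => F x t) tau (unit_rv i) = H i (gradx F x tau)).
Proof.
move=> F; rewrite {}/F; split; first exact: (Phi_C11 hH1 hH2 hH hgamma hA hL).
split=> [tau /box_strict ht | x tau ht i].
  split; first exact: (Phi_convex hH1 hH2 hH hgamma hA hL).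
  exact: (Phi_hess_le hH1 hH2 hH hgamma hA hL).
rewrite (derive_Phi_tau hH1 hH2 hH hgamma hA hL) //.
by rewrite (gradx_Phi hH1 hH2 hH hgamma hA hL) // sum_delta_mul.
Qed.
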